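(* For every integer $n\geq 1$ and every admissible matrix $\Theta$, the $K_0$ group of the noncommutative $\mathbb{R}^{2n}$ satisfies $K_0(A(\mathbb{R}^{2n}_\Theta))\cong\mathbb{Z}$.
   Context: Let $\Theta=(\theta_{pq})_{1\leq p,q\leq 2n}$ be a real skew-symmetric matrix with $\theta_{2m-1,2m}=-\theta_{2m,2m-1}>0$ for $m=1,\dots,n$ and all other entries $0$. The noncommutative $\mathbb{R}^{2n}$, $A(\mathbb{R}^{2n}_\Theta)$, is the unital $*$-algebra generated by $2n$ self-adjoint elements $x_1,\dots,x_{2n}$ subject to $[x_p,x_q]=x_px_q-x_qx_p=-i\theta_{pq}$ for all $p,q$ (so $[x_{2m-1},x_{2m}]=-i\theta_{2m-1,2m}$ and all other pairs commute); every element is a finite sum $\sum a_{p_1,\dots,p_{2n}}x_1^{p_1}\cdots x_{2n}^{p_{2n}}$ with complex coefficients (these ordered monomials being linearly independent), $x_j^0=1$. A projector over a $*$-algebra $A$ is a square matrix $p$ with entries in $A$ satisfying $p^2=p=p^*$. Projectors $p,q$ are equivalent if for some $N$ there is a unitary $u\in M_N(A)$ with $\mathrm{diag}(p,0)=u\,\mathrm{diag}(q,0)\,u^*$. Equivalence classes form a semigroup under $p+q:=\mathrm{diag}(p,q)$, and $K_0(A)$ is its Grothendieck group. *)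

From HB Require Import structures.
From mathcomp Require Import all_boot all_order all_algebra.
From mathcomp Require Import reals complex.
Set Implicit Arguments. Unset Strict Implicit. Unset Printing Implicit Defensive.
Import Order.TTheory GRing.Theory Num.Theory.
Local Open Scope ring_scope.

(* Admissible Theta (0-indexed: pairs (2m, 2m+1) for m < n). *)
Definition admissible (R : realType) (n : nat) (Theta : 'M[R]_(n.*2)) : Prop :=
  (forall p q : 'I_(n.*2), ~~ odd p -> val q = (val p).+1 ->
      0 < Theta p q /\ Theta q p = - Theta p q) /\
  (forall p q : 'I_(n.*2),
      ~ (~~ odd p /\ val q = (val p).+1) ->
      ~ (~~ odd q /\ val p = (val q).+1) -> Theta p q = 0).

Definition is_star (R : realType) (A : algType R[i]) (s : A -> A) : Prop :=
  [/\ involutive s,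
      forall a b, s (a + b) = s a + s b,
      forall (c : R[i]) a, s (c *: a) = conjc c *: s a &
      forall a b, s (a * b) = s b * s a].

Section StarMatrices.
Variables (R : realType) (A : algType R[i]) (s : A -> A).

Definition mxstar k l (M : 'M[A]_(k, l)) : 'M[A]_(l, k) :=
  \matrix_(i, j) s (M j i).

Definition is_projector k (p : 'M[A]_k) : Prop :=
  p *m p = p /\ mxstar p = p.

Definition is_unitary N (u : 'M[A]_N) : Prop :=
  u *m mxstar u = 1%:M /\ mxstar u *m u = 1%:M.

(* diag(p, 0) in M_N (meaningful when k <= N). *)
Definition padmx k N (p : 'M[A]_k) : 'M[A]_N :=
  \matrix_(i < N, j < N)
    (match (insub (val i) : option 'I_k), (insub (val j) : option 'I_k) with
     | Some i', Some j' => p i' j'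
     | _, _ => 0
     end).

Definition pmx := {k : nat & 'M[A]_k}.

Definition is_proj (p : pmx) : Prop := is_projector (projT2 p).

Definition proj_equiv (p q : pmx) : Prop :=
  exists N (u : 'M[A]_N), (projT1 p <= N)%N /\ (projT1 q <= N)%N /\
    is_unitary u /\
    padmx N (projT2 p) = u *m padmx N (projT2 q) *m mxstar u.

Definition pdsum (p q : pmx) : pmx :=
  existT _ (projT1 p + projT1 q)%N (block_mx (projT2 p) 0 0 (projT2 q)).

(* Grothendieck group: formal differences [p] - [q], with
   [p]-[q] = [p']-[q'] iff p + q' + r ~ p' + q + r for some projector r. *)
Definition groth_rel (p q p' q' : pmx) : Prop :=
  exists r : pmx, is_proj r /\
    proj_equiv (pdsum (pdsum p q') r) (pdsum (pdsum p' q) r).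

(* K_0(A) is isomorphic to Z: there is a map from formal differences of
   projectors to int that descends to a bijective group homomorphism
   K_0(A) -> Z (addition of classes being ([p]-[q]) + ([p']-[q']) =
   [p + p'] - [q + q']). *)
Definition K0_iso_Z : Prop :=
  exists f : pmx -> pmx -> int,
    [/\ forall p q p' q', is_proj p -> is_proj q -> is_proj p' -> is_proj q' ->
          (f p q = f p' q' <-> groth_rel p q p' q'),
        forall z : int, exists p q, [/\ is_proj p, is_proj q & f p q = z] &
        forall p q p' q', is_proj p -> is_proj q -> is_proj p' -> is_proj q' ->
          f (pdsum p p') (pdsum q q') = f p q + f p' q'].

End StarMatrices.

Definition monomial (R : realType) (A : algType R[i]) (m : nat)
    (x : 'I_m -> A) (e : {ffun 'I_m -> nat}) : A :=
  \prod_(i < m) x i ^+ e i.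

Definition pbw_basis (R : realType) (A : algType R[i]) (m : nat)
    (x : 'I_m -> A) : Prop :=
  (forall a : A, exists (s : seq {ffun 'I_m -> nat}) (c : {ffun 'I_m -> nat} -> R[i]),
      a = \sum_(e <- s) c e *: monomial x e) /\
  (forall (s : seq {ffun 'I_m -> nat}) (c : {ffun 'I_m -> nat} -> R[i]),
      uniq s -> \sum_(e <- s) c e *: monomial x e = 0 ->
      forall e, e \in s -> c e = 0).

From Pilot Require Import Defs.
From mathcomp Require Import all_boot all_order all_fingroup all_algebra zify.
From mathcomp Require Import reals complex.
From Stdlib Require Import ClassicalEpsilon.
Import Order.TTheory GRing.Theory Num.Theory.

Set Implicit Arguments. Unset Strict Implicit. Unset Printing Implicit Defensive.
Local Open Scope ring_scope.

(* The inner derivations [ad (x p)] are locally nilpotent, and by the PBW basis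
   and the nondegeneracy of Theta their common kernel is C.  As [x p] is
   self-adjoint, [ad (x p)] anticommutes with the involution, and the Leibniz
   rule gives [ad^2N (a^* a) = C(2N,N) (-1)^N (ad^N a)^* (ad^N a)] whenever
   [ad^(N+1) a = 0].  Applied to [\sum_i a_i^* a_i = 0] this peels off the
   derivations one generator at a time until the [a_i] are scalars, which then
   vanish.  Applied to the column norms in [P^* P = P] and [U^* U = 1], the same
   computation shows that the entries of projectors and unitaries over A are
   killed by every [ad (x p)], hence are scalars.  So projectors and unitaries
   over A are those over C, equivalence of projectors is classified by rank, and
   the rank difference is an isomorphism from K_0 onto Z. *)

Section InnerDerivation.
Variables (K : pzRingType) (A : algType K).

Definition ad (y a : A) : A := y * a - a * y.

Definition adn (y : A) (k : nat) : A -> A := iter k (ad y).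

Definition ad_nil (y a : A) : Prop := exists N, adn y N a = 0.

Variable y : A.

Lemma adD : {morph ad y : a b / a + b}.
Proof. by move=> a b; rewrite /ad mulrDr mulrDl opprD addrACA. Qed.

Lemma adZ c a : ad y (c *: a) = c *: ad y a.
Proof. by rewrite /ad scalerBr scalerAr scalerAl. Qed.

Lemma ad0 : ad y 0 = 0.
Proof. by rewrite /ad mulr0 mul0r subrr. Qed.

Lemma adM a b : ad y (a * b) = ad y a * b + a * ad y b.
Proof. by rewrite /ad mulrBl mulrBr !mulrA addrA subrK. Qed.

Lemma ad_sum I (r : seq I) (P : pred I) (F : I -> A) :
  ad y (\sum_(i <- r | P i) F i) = \sum_(i <- r | P i) ad y (F i).
Proof. exact: (big_morph _ adD ad0). Qed.

Lemma adB a b : ad y (a - b) = ad y a - ad y b.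
Proof. by rewrite adD -scaleN1r adZ scaleN1r. Qed.

Lemma ad1 : ad y 1 = 0.
Proof. by rewrite /ad mulr1 mul1r subrr. Qed.

Lemma ad_scalar c : ad y c%:A = 0.
Proof. by rewrite adZ ad1 scaler0. Qed.

Lemma ad_scalarl c a : ad c%:A a = 0.
Proof. by rewrite /ad -scalerAl mul1r -scalerAr mulr1 subrr. Qed.

Lemma ad_jacobi z a : ad y (ad z a) - ad z (ad y a) = ad (ad y z) a.
Proof.
rewrite [ad z a]/ad adB !adM [ad z (ad y a)]/ad [ad (ad y z) a]/ad.
by rewrite opprB opprD addrAC [_ + z * _ + _]addrACA subrr addr0 addrA addrK.
Qed.

Lemma adnD k : {morph adn y k : a b / a + b}.
Proof. by move=> a b; elim: k => //= k ->; rewrite adD. Qed.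

Lemma adn0 k : adn y k 0 = 0.
Proof. by elim: k => //= k ->; rewrite ad0. Qed.

Lemma adnZ k c a : adn y k (c *: a) = c *: adn y k a.
Proof. by elim: k => //= k ->; rewrite adZ. Qed.

Lemma adn_sum k I (r : seq I) (P : pred I) (F : I -> A) :
  adn y k (\sum_(i <- r | P i) F i) = \sum_(i <- r | P i) adn y k (F i).
Proof. exact: (big_morph _ (adnD k) (adn0 k)). Qed.

Lemma adnS k a : adn y k.+1 a = ad y (adn y k a).
Proof. by []. Qed.

Lemma adnSr k a : adn y k.+1 a = adn y k (ad y a).
Proof. exact: iterSr. Qed.

Lemma adn_scalar k c : (0 < k)%N -> adn y k c%:A = 0.
Proof. by case: k => // k _; rewrite adnSr ad_scalar adn0. Qed.

Lemma adn_eq0_leq k l a : (k <= l)%N -> adn y k a = 0 -> adn y l a = 0.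
Proof. by move=> /subnK <- ak0; rewrite /adn iterD -/(adn y k a) ak0; apply: adn0. Qed.

(* The Leibniz rule, in which only the term of bidegree (j, l) survives. *)
Lemma adn_mul_top j l u v : adn y j.+1 u = 0 -> adn y l.+1 v = 0 ->
  adn y (j + l)%N (u * v) = 'C(j + l, j)%:R *: (adn y j u * adn y l v).
Proof.
elim: j l u v => [|j IHj] l u v adu.
  rewrite add0n bin0 scale1r.
  elim: l v => [|l IHl] v adv; first by [].
  rewrite adnSr adM (adu : ad y u = 0) mul0r add0r IHl -?adnSr //.
elim: l v => [|l IHl] v adv.
  rewrite addn0 binn scale1r adnSr adM (adv : ad y v = 0) mulr0 addr0.
  by rewrite -[in LHS](addn0 j) IHj -?adnSr // addn0 binn scale1r.
rewrite addnS adnSr adM adnD IHl -?adnSr // addSnnS IHj -?adnSr //.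
by rewrite -addSnnS -scalerDl -natrD binS addnC.
Qed.

Lemma ad_nilD a b : ad_nil y a -> ad_nil y b -> ad_nil y (a + b).
Proof.
move=> [Na ha] [Nb hb]; exists (Na + Nb)%N.
by rewrite adnD (adn_eq0_leq (leq_addr _ _) ha) (adn_eq0_leq (leq_addl _ _) hb) addr0.
Qed.

Lemma ad_nilZ c a : ad_nil y a -> ad_nil y (c *: a).
Proof. by move=> [N h]; exists N; rewrite adnZ h scaler0. Qed.

Lemma ad_nilM a b : ad_nil y a -> ad_nil y b -> ad_nil y (a * b).
Proof.
move=> [Na ha] [Nb hb]; exists (Na + Nb)%N.
rewrite adn_mul_top ?ha ?mul0r ?scaler0 //.
  exact: adn_eq0_leq (leqnSn _) ha.
exact: adn_eq0_leq (leqnSn _) hb.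
Qed.

Lemma ad_nil_scalar c : ad_nil y c%:A.
Proof. by exists 1%N; rewrite adn_scalar. Qed.

Lemma ad_nil1 : ad_nil y 1.
Proof. by exists 1%N; rewrite /= ad1. Qed.

Lemma ad_nilX a k : ad_nil y a -> ad_nil y (a ^+ k).
Proof.
move=> ha; elim: k => [|k IHk]; first by rewrite expr0; apply: ad_nil1.
by rewrite exprS; apply: ad_nilM.
Qed.

End InnerDerivation.

Lemma central_binomial_sign_neq0 (F : numDomainType) N :
  ('C(N.*2, N)%:R * (-1) ^+ N : F) != 0.
Proof. by rewrite mulf_neq0 ?signr_eq0 // pnatr_eq0 -lt0n bin_gt0 -addnn leq_addl. Qed.

Section StarAlgebra.
Variables (R : realType) (A : algType R[i]) (s : A -> A).
Hypothesis star_s : is_star s.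

Lemma starK : involutive s. Proof. by case: star_s. Qed.
Lemma starD : {morph s : a b / a + b}. Proof. by case: star_s. Qed.
Lemma starZ c a : s (c *: a) = c^* *: s a. Proof. by case: star_s. Qed.
Lemma starM a b : s (a * b) = s b * s a. Proof. by case: star_s. Qed.

Lemma starN a : s (- a) = - s a.
Proof. by rewrite -scaleN1r starZ rmorphN1 scaleN1r. Qed.

Lemma star0 : s 0 = 0.
Proof. by have := starZ 0 0; rewrite scale0r conjC0 scale0r. Qed.

Lemma starB a b : s (a - b) = s a - s b.
Proof. by rewrite starD starN. Qed.

Lemma star1 : s 1 = 1.
Proof. by rewrite -[s 1]mul1r -{1}(starK 1) -starM mul1r starK. Qed.

Lemma star_scalar c : s c%:A = c^*%:A.
Proof. by rewrite starZ star1. Qed.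

Lemma sum_star_mul_scalar_eq0 (I : finType) (c : I -> R[i]) :
  \sum_i s (c i)%:A * (c i)%:A = 0 -> forall i, c i = 0.
Proof.
rewrite (eq_bigr (fun i => (`|c i| ^+ 2)%:A)) => [|i _]; last first.
  by rewrite star_scalar -scalerAl mul1r scalerA mulrC normCK.
move=> /eqP; rewrite -scaler_suml scaler_eq0 oner_eq0 orbF => /eqP sum0 i.
have /(_ i isT) /eqP := psumr_eq0P (fun i _ => exprn_ge0 2 (normr_ge0 (c i))) sum0.
by rewrite sqrf_eq0 normr_eq0 => /eqP.
Qed.

Variable y : A.
Hypothesis star_y : s y = y.

Lemma ad_star a : ad y (s a) = - s (ad y a).
Proof. by rewrite /ad starB !starM star_y opprB. Qed.

Lemma adn_star k a : adn y k (s a) = (-1) ^+ k *: s (adn y k a).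
Proof.
elim: k => [|k IHk]; first by rewrite scale1r.
by rewrite !adnS IHk adZ ad_star exprS mulN1r scaleNr scalerN.
Qed.

(* Leibniz and [adn_star] give [ad^2N (a^* a) = C(2N,N) (-1)^N (ad^N a)^* (ad^N a)]. *)
Lemma adn_double_sum_star_mul I (r : seq I) (F : I -> A) N :
  (forall i, adn y N.+1 (F i) = 0) ->
  adn y N.*2 (\sum_(i <- r) s (F i) * F i) = 0 ->
  \sum_(i <- r) s (adn y N (F i)) * adn y N (F i) = 0.
Proof.
move=> nilF; have nil_sF i : adn y N.+1 (s (F i)) = 0.
  by rewrite adn_star nilF star0 scaler0.
rewrite adn_sum; under eq_bigr => i _ do
  rewrite -addnn (adn_mul_top (nil_sF i) (nilF i)) adn_star -scalerAl scalerA.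
move=> /eqP; rewrite -scaler_sumr scaler_eq0 addnn.
by rewrite (negbTE (central_binomial_sign_neq0 _ _)) => /eqP.
Qed.

End StarAlgebra.

Section Positivity.
Variables (R : realType) (A : algType R[i]) (s : A -> A).
Hypothesis star_s : is_star s.
Variables (m : nat) (x : 'I_m -> A) (k : 'I_m -> 'I_m -> R[i]).
Hypotheses (star_x : forall p, s (x p) = x p)
  (ad_x : forall p q, ad (x p) (x q) = (k p q)%:A)
  (ad_x_nil : forall p a, ad_nil (x p) a)
  (ad_x_center : forall a, (forall p, ad (x p) a = 0) -> exists c, a = c%:A).

Lemma ad_x_comm p q a : ad (x p) (ad (x q) a) = ad (x q) (ad (x p) a).
Proof. by apply/eqP; rewrite -subr_eq0 ad_jacobi ad_x ad_scalarl. Qed.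

Lemma ad_adn_x_comm p q N a :
  ad (x q) (adn (x p) N a) = adn (x p) N (ad (x q) a).
Proof. by elim: N => [//|N IHN]; rewrite !adnS ad_x_comm IHN. Qed.

Lemma ad_nil_uniform (I : finType) (F : I -> A) p :
  exists N, forall i, adn (x p) N (F i) = 0.
Proof.
have [N nilF] := fin_all_exists (fun i => ad_x_nil p (F i)).
by exists (\max_i N i) => i; apply: adn_eq0_leq (nilF i); apply: leq_bigmax.
Qed.

(* Induction on the set [S] of generators whose derivations may not kill the
   [F i]; for [p] in [S], descending induction on the nilpotency degree of
   [ad (x p)] on the [F i], using [adn_double_sum_star_mul]. *)
Lemma sum_star_mul_eq0_outside (S : seq 'I_m) n (F : 'I_n -> A) :
  (forall i q, q \notin S -> ad (x q) (F i) = 0) ->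
  \sum_i s (F i) * F i = 0 -> forall i, F i = 0.
Proof.
elim: S n F => [|p S IHS] n F adF sumF.
  have [c Fc] := fin_all_exists (fun i => ad_x_center (fun q => adF i q isT)).
  move: sumF; rewrite (eq_bigr (fun i => s (c i)%:A * (c i)%:A)) => [|i _].
    by move=> /(sum_star_mul_scalar_eq0 star_s) c0 i; rewrite Fc c0 scale0r.
  by rewrite Fc.
have [N] := ad_nil_uniform F p.
elim: N => [|N IHN] nilF; first exact: nilF.
apply: IHN => i; apply: (IHS n (fun i => adn (x p) N (F i))) => [j q qS|].
  case: (q =P p) => [->|/eqP qp]; first exact: nilF.
  by rewrite ad_adn_x_comm adF ?adn0 // in_cons negb_or qp.
by apply: (adn_double_sum_star_mul star_s (star_x p) nilF); rewrite sumF adn0.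
Qed.

Lemma sum_star_mul_eq0 n (F : 'I_n -> A) :
  \sum_i s (F i) * F i = 0 -> forall i, F i = 0.
Proof. by apply: (sum_star_mul_eq0_outside (S := enum 'I_m)) => i q; rewrite mem_enum. Qed.

(* Descending induction on the nilpotency degree of [ad (x p)] on the entries;
   the hypothesis on [c] is what makes the degree drop. *)
Lemma column_norms_ad_eq0 n l (P : 'M[A]_(n, l)) (c : 'I_l -> A) p :
  (forall j, \sum_i s (P i j) * P i j = c j) ->
  (forall N, (forall i j, adn (x p) N.+2 (P i j) = 0) ->
     forall j, adn (x p) N.+1.*2 (c j) = 0) ->
  forall i j, ad (x p) (P i j) = 0.
Proof.
move=> normP nil_c.
have [N nilP] := ad_nil_uniform (fun ij : 'I_n * 'I_l => P ij.1 ij.2) p.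
have {nilP} : forall i j, adn (x p) N.+1 (P i j) = 0.
  by move=> i j; apply: adn_eq0_leq (leqnSn N) (nilP (i, j)).
elim: N => [//|N IHN] nilP; apply: IHN => i j; move: i.
apply: sum_star_mul_eq0; apply: (adn_double_sum_star_mul star_s (star_x p)).
  by move=> i; apply: nilP.
by rewrite normP nil_c.
Qed.

Lemma projector_entries_scalar n (P : 'M[A]_n) :
  is_projector s P -> forall i j, exists c, P i j = c%:A.
Proof.
move=> [PP sP] i j; apply: ad_x_center => p.
apply: (column_norms_ad_eq0 (c := fun j => P j j)) => [j'|N nilP j'].
  have := congr1 (fun M : 'M[A]_n => M j' j') PP; rewrite -{1}sP mxE => <-.
  by apply: eq_bigr => i' _; rewrite mxE.
apply: adn_eq0_leq (nilP j' j').
by rewrite doubleS !ltnS -addnn leq_addr.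
Qed.

Lemma unitary_entries_scalar n (U : 'M[A]_n) :
  Defs.is_unitary s U -> forall i j, exists c, U i j = c%:A.
Proof.
move=> [_ UU] i j; apply: ad_x_center => p.
apply: (column_norms_ad_eq0 (c := fun _ => 1)) => [j'|N _ _].
  have := congr1 (fun M : 'M[A]_n => M j' j') UU; rewrite /= !mxE eqxx mulr1n => <-.
  by apply: eq_bigr => i' _; rewrite mxE.
by rewrite doubleS adnSr ad1 adn0.
Qed.

End Positivity.

Section PBW.
Variables (R : realType) (A : algType R[i]).
Variables (m : nat) (x : 'I_m -> A) (k : 'I_m -> 'I_m -> R[i]).
Hypothesis ad_x : forall p q, ad (x p) (x q) = (k p q)%:A.
Hypothesis pbw : pbw_basis x.

Local Notation exponent := {ffun 'I_m -> nat}.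

Lemma ad_nil_monomial p e : ad_nil (x p) (monomial x e).
Proof.
apply: (big_ind (ad_nil (x p))) => [|a b|j _]; first exact: ad_nil1.
  exact: ad_nilM.
by apply: ad_nilX; exists 2%N; rewrite adnS /= ad_x ad_scalar.
Qed.

Lemma pbw_ad_nil p a : ad_nil (x p) a.
Proof.
have [r [c ->]] := pbw.1 a.
apply: (big_ind (ad_nil (x p))) => [|a1 a2|e _]; first by exists 0%N.
  exact: ad_nilD.
exact/ad_nilZ/ad_nil_monomial.
Qed.

Lemma pbw_uniq_span a :
  exists r c, uniq r /\ a = \sum_(e <- r) c e *: monomial x e.
Proof.
have [r [c ->]] := pbw.1 a.
exists (undup r), (fun e => c e *+ count_mem e r); split; first exact: undup_uniq.
rewrite -big_undup_iterop_count; apply: eq_bigr => e _.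
by rewrite Monoid.iteropE -scalerMnl; elim: (count_mem e r) => //= j ->; rewrite mulrS.
Qed.

Lemma pbw_coef_eq0 (r : seq exponent) (f g : exponent -> exponent) (c : exponent -> R[i]) :
  uniq r -> {in r, cancel f g} ->
  \sum_(e <- r) c e *: monomial x (f e) = 0 -> forall e, e \in r -> c e = 0.
Proof.
move=> ur fK sum0 e er; rewrite -(fK e er).
apply: (pbw.2 (map f r) (c \o g)); last exact: map_f.
  by rewrite map_inj_in_uniq // => e1 e2 /fK + /fK + efe => <- <-; rewrite efe.
by rewrite big_map -[RHS]sum0; apply: eq_big_seq => e' /fK /= ->.
Qed.

Definition exp_pred (q : 'I_m) (e : exponent) : exponent :=
  [ffun j => if j == q then (e j).-1 else e j].

Definition exp_succ (q : 'I_m) (e : exponent) : exponent :=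
  [ffun j => if j == q then (e j).+1 else e j].

Lemma exp_predK q (e : exponent) : (0 < e q)%N -> exp_succ q (exp_pred q e) = e.
Proof.
move=> eq0; apply/ffunP => j; rewrite !ffunE.
by case: (j =P q) => [->|//]; rewrite prednK.
Qed.

Lemma ad_x_pow q' j n : ad (x q') (x j ^+ n) = (n%:R * k q' j) *: x j ^+ n.-1.
Proof.
elim: n => [|n IHn]; first by rewrite expr0 mul0r scale0r ad1.
rewrite exprS adM IHn ad_x -scalerAl mul1r -scalerAr.
case: n IHn => [|n] _; first by rewrite mul0r scale0r addr0 mul1r.
by rewrite -exprS -scalerDl [in RHS]mulrSr mulrDl mul1r addrC.
Qed.

Section PartnerDerivative.
Variables q q' : 'I_m.
Hypothesis k_partner : forall j, j != q -> k q' j = 0.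

Lemma ad_partner_prod (e : exponent) (r : seq 'I_m) : uniq r ->
  ad (x q') (\prod_(j <- r) x j ^+ e j) =
  (if q \in r then (e q)%:R * k q' q else 0) *: \prod_(j <- r) x j ^+ exp_pred q e j.
Proof.
elim: r => [_|j r IHr /= /andP[jr ur]].
  by rewrite !big_nil scale0r ad1.
rewrite !big_cons adM IHr // in_cons ffunE ad_x_pow.
have [jq|jq] := eqVneq j q.
  subst j; rewrite (negbTE jr) scale0r mulr0 addr0 /= -scalerAl.
  congr (_ *: (_ * _)); apply: eq_big_seq => j' j'r.
  by rewrite ffunE; case: eqP j'r => // -> qr; rewrite qr in jr.
by rewrite k_partner // mulr0 scale0r mul0r add0r /= -scalerAr.
Qed.

Lemma ad_partner_monomial e :
  ad (x q') (monomial x e) = ((e q)%:R * k q' q) *: monomial x (exp_pred q e).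
Proof. by rewrite /monomial ad_partner_prod ?index_enum_uniq ?mem_index_enum. Qed.

End PartnerDerivative.

Hypothesis partner :
  forall q, exists q', k q' q != 0 /\ forall j, j != q -> k q' j = 0.

(* For the partner [q'] of [q], [ad (x q')] lowers the exponent of [x q] by one,
   injectively on the monomials in which [x q] occurs. *)
Lemma pbw_center_coef_eq0 (r : seq exponent) (c : exponent -> R[i]) q :
  uniq r -> (forall p, ad (x p) (\sum_(e <- r) c e *: monomial x e) = 0) ->
  forall e, e \in r -> (0 < e q)%N -> c e = 0.
Proof.
move=> ur ad0 e er eq0.
have [q' [kq'q k_partner]] := partner q.
pose r' := [seq e : exponent <- r | (0 < e q)%N].
have : \sum_(e <- r') (c e * ((e q)%:R * k q' q)) *: monomial x (exp_pred q e) = 0.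
  rewrite big_filter big_mkcond -[RHS](ad0 q') ad_sum.
  apply: eq_bigr => e' _; rewrite adZ (ad_partner_monomial k_partner) scalerA.
  by case: ifP => // /negbT; rewrite -leqNgt leqn0 => /eqP ->; rewrite mul0r mulr0 scale0r.
have predK : {in r', cancel (exp_pred q) (exp_succ q)}.
  by move=> e'; rewrite mem_filter => /andP[e'0 _]; apply: exp_predK.
have er' : e \in r' by rewrite mem_filter eq0.
move=> /(pbw_coef_eq0 (filter_uniq _ ur) predK) /(_ e er') /eqP.
by rewrite !mulf_eq0 pnatr_eq0 eqn0Ngt eq0 (negbTE kq'q) /= orbF => /eqP.
Qed.

Lemma pbw_center a : (forall p, ad (x p) a = 0) -> exists c, a = c%:A.
Proof.
have [r [c [ur ->]]] := pbw_uniq_span a => ad0.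
exists (\sum_(e <- r | e == [ffun=> 0%N]) c e).
rewrite scaler_suml [RHS]big_mkcond; apply: eq_big_seq => e er.
have [->|e0] := eqVneq e [ffun=> 0%N].
  by rewrite /monomial big1 // => j _; rewrite ffunE expr0.
have [q eq0] : exists q, (0 < e q)%N.
  apply/existsP; apply: contraR e0 => /existsPn e0.
  by apply/eqP/ffunP => j; rewrite ffunE; apply/eqP; rewrite -leqn0 leqNgt e0.
by rewrite (pbw_center_coef_eq0 ur ad0 er eq0) scale0r.
Qed.

End PBW.

Section PartialIdentity.
Variable T : pzRingType.

Lemma mulmx_pid_mxE k N p (X : 'M[T]_(p, k)) i j :
  (X *m (pid_mx k : 'M_(k, N))) i j =
  if insub (val j) is Some j' then X i j' else 0.
Proof.
rewrite mxE; case: insubP => [j' _ jj'|jk].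
  rewrite (bigD1 j') //= big1 ?addr0 => [|l lj'].
    by rewrite mxE -jj' eqxx ltn_ord mulr1.
  by rewrite mxE -jj' (inj_eq val_inj) (negbTE lj') mulr0.
apply: big1 => l _; rewrite mxE; case: eqP => [lj|]; last by rewrite mulr0.
by move: (ltn_ord l); rewrite lj (negbTE jk).
Qed.

Lemma pid_mx_mulmxE k N p (X : 'M[T]_(k, p)) i j :
  ((pid_mx k : 'M_(N, k)) *m X) i j =
  if insub (val i) is Some i' then X i' j else 0.
Proof.
rewrite mxE; case: insubP => [i' _ ii'|ik].
  rewrite (bigD1 i') //= big1 ?addr0 => [|l li'].
    by rewrite mxE -ii' eqxx ltn_ord mul1r.
  by rewrite mxE -ii' (inj_eq val_inj) eq_sym (negbTE li') mul0r.
apply: big1 => l _; rewrite mxE; case: eqP => [il|]; last by rewrite mul0r.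
by move: (ltn_ord l); rewrite -il (negbTE ik).
Qed.

End PartialIdentity.

Lemma padmxE (R : realType) (A : algType R[i]) k N (P : 'M[A]_k) :
  padmx N P = (pid_mx k : 'M_(N, k)) *m P *m pid_mx k.
Proof.
apply/matrixP => i j; rewrite [LHS]mxE mulmx_pid_mxE.
case: (insub (val j)) => [j'|]; last by case: insub.
by rewrite pid_mx_mulmxE; case: insub.
Qed.

Section OrthogonalProjections.
Local Open Scope sesquilinear_scope.
Variable C : numClosedFieldType.

Definition is_orthoprojmx n (P : 'M[C]_n) := P *m P = P /\ P ^t* = P.

Lemma mxrank_unitary_conj n (U X : 'M[C]_n) :
  U \is unitarymx -> \rank (U *m X *m U ^t*) = \rank X.
Proof.
move=> Uu; rewrite mxrankMfree ?row_free_unit ?unitarymx_unit ?trmxC_unitary //.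
by rewrite -mxrank_tr trmx_mul mxrankMfree ?mxrank_tr // row_free_unit unitmx_tr unitarymx_unit.
Qed.

Lemma trmxC_perm_mx n (sg : 'S_n) : (perm_mx sg : 'M[C]_n) ^t* = perm_mx sg^-1.
Proof. by rewrite -map_trmx map_perm_mx tr_perm_mx. Qed.

Lemma perm_mx_unitary n (sg : 'S_n) : (perm_mx sg : 'M[C]_n) \is unitarymx.
Proof. by apply/unitarymxP; rewrite trmxC_perm_mx -perm_mxM mulgV perm_mx1. Qed.

Lemma perm_pred_prefix n (b : pred 'I_n) :
  exists (sg : 'S_n) r, (r <= n)%N /\ forall i, b (sg i) = (i < r)%N.
Proof.
pose L := filter b (enum 'I_n) ++ filter (predC b) (enum 'I_n).
have /tuple_permP [sg Lsg] : perm_eq L (ord_tuple n).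
  by rewrite val_ord_tuple perm_filterC.
have sizeL : size L = n by rewrite Lsg size_tuple.
exists sg, (size (filter b (enum 'I_n))); split.
  by rewrite -[X in (_ <= X)%N]sizeL size_cat leq_addr.
move=> i; have <- : nth i L i = sg i.
  by rewrite Lsg -tnth_nth tnth_mktuple tnth_ord_tuple.
rewrite nth_cat; case: ifP => iL; first by have /[!mem_filter] /andP[] := mem_nth i iL.
have iL' : (i - size (filter b (enum 'I_n)) < size (filter (predC b) (enum 'I_n)))%N.
  by rewrite ltn_subLR -?size_cat ?sizeL // leqNgt iL.
by have /[!mem_filter] /andP[/= /negbTE] := mem_nth i iL'.
Qed.

Lemma diag_mx01_perm_pid n (d : 'rV[C]_n) :
  (forall i, d 0 i = 0 \/ d 0 i = 1) ->
  exists r (sg : 'S_n), (r <= n)%N /\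
    perm_mx sg *m diag_mx d *m (perm_mx sg) ^t* = pid_mx r.
Proof.
move=> d01; have [sg [r [rn sgr]]] := perm_pred_prefix (fun i => d 0 i == 1).
exists r, sg; split => //.
rewrite trmxC_perm_mx -col_permE -row_permE; apply/matrixP => i j; rewrite !mxE.
rewrite (inj_eq perm_inj); have := sgr i; case: (d01 (sg i)) => ->.
  by rewrite eq_sym oner_eq0 => <-; rewrite andbF mul0rn.
by rewrite eqxx => <-; rewrite andbT.
Qed.

Lemma orthoprojmx_unitary_pid n (P : 'M[C]_n) : is_orthoprojmx P ->
  exists r (V : 'M[C]_n),
    [/\ (r <= n)%N, V \is unitarymx & V *m P *m V ^t* = pid_mx r].
Proof.
move=> [PP Ph].
have /orthomx_spectralP : P \is normalmx by apply/normalmxP; rewrite Ph.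
have Su := spectral_unitarymx P; have S'S := mulmx1C (unitarymxP Su).
set S := spectralmx P in Su S'S *; set d := spectral_diag P.
rewrite invmx_unitary // => eP.
have SPS : S *m P *m S ^t* = diag_mx d.
  by rewrite eP !mulmxA (unitarymxP Su) mul1mx mulmxtVK.
have dd : diag_mx d *m diag_mx d = diag_mx d.
  by rewrite -SPS !mulmxA -(mulmxA _ _ S) S'S mulmx1 -(mulmxA _ P P) PP.
have d01 i : d 0 i = 0 \/ d 0 i = 1.
  have /matrixP /(_ i i) := dd; rewrite mulmx_diag !mxE eqxx !mulr1n.
  move=> /eqP; rewrite -subr_eq0 -{3}(mulr1 (d 0 i)) -mulrBr mulf_eq0 subr_eq0.
  by move=> /orP[] /eqP; [left|right].
have [r [sg [rn sgd]]] := diag_mx01_perm_pid d01.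
exists r, (perm_mx sg *m S); split => //; first exact: mul_unitarymx (perm_mx_unitary sg) Su.
by rewrite trmx_mul map_mxM !mulmxA -(mulmxA _ S P) -(mulmxA _ (S *m P)) SPS.
Qed.

Lemma orthoprojmx_unitary_similar n (P Q : 'M[C]_n) :
  is_orthoprojmx P -> is_orthoprojmx Q -> \rank P = \rank Q ->
  exists2 U, U \is unitarymx & P = U *m Q *m U ^t*.
Proof.
move=> /orthoprojmx_unitary_pid [r [V [rn Vu VP]]].
move=> /orthoprojmx_unitary_pid [r' [W [r'n Wu WQ]]] PQ.
have rr' : r = r'.
  rewrite -(rank_pid_mx C rn rn) -(rank_pid_mx C r'n r'n) -VP -WQ.
  by rewrite !mxrank_unitary_conj.
subst r'; exists (V ^t* *m W); first by rewrite mul_unitarymx ?trmxC_unitary.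
have V'V := mulmx1C (unitarymxP Vu).
rewrite trmx_mul map_mxM trmxCK !mulmxA -(mulmxA _ W Q) -(mulmxA _ (W *m Q)) WQ -VP.
by rewrite !mulmxA V'V mul1mx mulmxKtV.
Qed.

Lemma is_orthoprojmx_block p q (P : 'M[C]_p) (Q : 'M[C]_q) :
  is_orthoprojmx P -> is_orthoprojmx Q -> is_orthoprojmx (block_mx P 0 0 Q).
Proof.
move=> [PP Ph] [QQ Qh]; split.
  by rewrite mulmx_block !mulmx0 !mul0mx !addr0 !add0r PP QQ.
by rewrite tr_block_mx map_block_mx !trmx0 !map_mx0 Ph Qh.
Qed.

Lemma orthoprojmx_pad k N (P : 'M[C]_k) : (k <= N)%N -> is_orthoprojmx P ->
  is_orthoprojmx ((pid_mx k : 'M_(N, k)) *m P *m pid_mx k).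
Proof.
move=> kN [PP Ph]; split.
  have EE : (pid_mx k : 'M[C]_(k, N)) *m (pid_mx k : 'M_(N, k)) = 1%:M.
    by rewrite pid_mx_id // pid_mx_1.
  by rewrite -!mulmxA (mulmxA (pid_mx k) (pid_mx k)) EE mul1mx (mulmxA P P) PP.
by rewrite !trmx_mul !map_mxM !tr_pid_mx !map_pid_mx Ph mulmxA.
Qed.

Lemma mxrank_pad k N (P : 'M[C]_k) : (k <= N)%N ->
  \rank ((pid_mx k : 'M_(N, k)) *m P *m (pid_mx k : 'M_(k, N))) = \rank P.
Proof.
move=> kN; rewrite mxrankMfree; last by rewrite /row_free rank_pid_mx.
by rewrite -mxrank_tr trmx_mul tr_pid_mx mxrankMfree ?mxrank_tr // /row_free rank_pid_mx.
Qed.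

End OrthogonalProjections.

Section ScalarProjections.
Local Open Scope sesquilinear_scope.
Variables (R : realType) (A : algType R[i]) (s : A -> A).
Hypothesis star_s : is_star s.
Hypothesis projector_scalar : forall n (P : 'M[A]_n),
  is_projector s P -> forall i j, exists c, P i j = c%:A.
Hypothesis unitary_scalar : forall n (U : 'M[A]_n),
  Defs.is_unitary s U -> forall i j, exists c, U i j = c%:A.

Local Notation ia := (in_alg A).

(* Only meaningful on scalars; elsewhere an arbitrary coefficient. *)
Definition scalar_coef (a : A) : R[i] := epsilon (inhabits 0) (fun c => a = c%:A).

Lemma scalar_coefK a : (exists c, a = c%:A) -> (scalar_coef a)%:A = a.
Proof. by move=> /(epsilon_spec (inhabits 0)) <-. Qed.

Lemma scalar_coef_in_alg c : scalar_coef c%:A = c.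
Proof. by apply: (fmorph_inj ia) => /=; rewrite scalar_coefK; last exists c. Qed.

Definition scalar_coefmx p q (M : 'M[A]_(p, q)) := map_mx scalar_coef M.

Lemma scalar_coefmxK p q (M : 'M[A]_(p, q)) :
  (forall i j, exists c, M i j = c%:A) -> map_mx ia (scalar_coefmx M) = M.
Proof. by move=> Msc; apply/matrixP => i j; rewrite !mxE /= scalar_coefK. Qed.

Lemma scalar_coefmx_in_alg p q (M : 'M[R[i]]_(p, q)) : scalar_coefmx (map_mx ia M) = M.
Proof. by apply/matrixP => i j; rewrite !mxE scalar_coef_in_alg. Qed.

Lemma scalar_coefmx_block p q (P : 'M[A]_p) (Q : 'M[A]_q) :
  scalar_coefmx (block_mx P 0 0 Q) = block_mx (scalar_coefmx P) 0 0 (scalar_coefmx Q).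
Proof.
rewrite /scalar_coefmx map_block_mx -!/(scalar_coefmx _).
by rewrite -[0 : 'M_(p, q)](map_mx0 ia) -[0 : 'M_(q, p)](map_mx0 ia) !scalar_coefmx_in_alg.
Qed.

Lemma map_mx_in_alg_inj p q : injective (map_mx ia : 'M[R[i]]_(p, q) -> 'M[A]_(p, q)).
Proof. by move=> M N MN; rewrite -[M]scalar_coefmx_in_alg MN scalar_coefmx_in_alg. Qed.

Lemma mxstar_in_alg p q (M : 'M[R[i]]_(p, q)) : mxstar s (map_mx ia M) = map_mx ia (M ^t*).
Proof. by apply/matrixP => i j; rewrite !mxE /= (star_scalar star_s). Qed.

Lemma is_projector_in_alg n (P : 'M[R[i]]_n) :
  is_projector s (map_mx ia P) <-> is_orthoprojmx P.
Proof.
rewrite /is_projector mxstar_in_alg -map_mxM.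
by split=> [[/map_mx_in_alg_inj PP /map_mx_in_alg_inj Ph]|[-> ->]].
Qed.

Lemma is_unitary_in_alg n (U : 'M[R[i]]_n) :
  Defs.is_unitary s (map_mx ia U) <-> U \is unitarymx.
Proof.
rewrite /Defs.is_unitary mxstar_in_alg -!map_mxM -(map_mx1 ia).
split=> [[/map_mx_in_alg_inj UU _]|/unitarymxP UU]; first exact/unitarymxP.
by rewrite UU (mulmx1C UU).
Qed.

Lemma padmx_in_alg k N (P : 'M[R[i]]_k) :
  padmx N (map_mx ia P) = map_mx ia ((pid_mx k : 'M_(N, k)) *m P *m pid_mx k).
Proof. by rewrite padmxE !map_mxM !map_pid_mx. Qed.

Lemma map_block_mx_diag p q (P : 'M[R[i]]_p) (Q : 'M[R[i]]_q) :
  map_mx ia (block_mx P 0 0 Q) = block_mx (map_mx ia P) 0 0 (map_mx ia Q).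
Proof. by rewrite map_block_mx !map_mx0. Qed.

Definition proj_rank (p : pmx A) : nat := \rank (scalar_coefmx (projT2 p)).

Lemma is_proj_scalar (p : pmx A) : is_proj s p ->
  map_mx ia (scalar_coefmx (projT2 p)) = projT2 p /\
  is_orthoprojmx (scalar_coefmx (projT2 p)).
Proof.
move=> pP; have Pe := scalar_coefmxK (projector_scalar pP).
by split=> //; apply/is_projector_in_alg; rewrite Pe.
Qed.

Lemma is_proj_pdsum p q : is_proj s p -> is_proj s q -> is_proj s (pdsum p q).
Proof.
move=> /is_proj_scalar [eP Pproj] /is_proj_scalar [eQ Qproj].
rewrite /is_proj /= -eP -eQ -map_block_mx_diag is_projector_in_alg.
exact: is_orthoprojmx_block.
Qed.

Lemma proj_rank_pdsum p q : proj_rank (pdsum p q) = (proj_rank p + proj_rank q)%N.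
Proof. by rewrite /proj_rank /= scalar_coefmx_block rank_diag_block_mx. Qed.

Lemma proj_equivE p q : is_proj s p -> is_proj s q ->
  proj_equiv s p q <-> proj_rank p = proj_rank q.
Proof.
case: p q => [kp P] [kq Q] /is_proj_scalar [/= eP Pproj] /is_proj_scalar [/= eQ Qproj].
rewrite /proj_rank /=; split.
  move=> [N [u [/= kpN [kqN [uU]]]]].
  have eu := scalar_coefmxK (unitary_scalar uU); move: uU.
  rewrite -eP -eQ -eu is_unitary_in_alg mxstar_in_alg !padmx_in_alg -!map_mxM.
  move=> uU /map_mx_in_alg_inj ePQ.
  rewrite !scalar_coefmx_in_alg -(mxrank_pad _ kpN) -(mxrank_pad _ kqN) ePQ.
  by rewrite mxrank_unitary_conj.
move=> PQ; have kpN := leq_addr kq kp; have kqN := leq_addl kp kq.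
have [U Uu ePQ] : exists2 U, U \is unitarymx &
    (pid_mx kp : 'M_(kp + kq, kp)) *m scalar_coefmx P *m pid_mx kp =
    U *m ((pid_mx kq : 'M_(kp + kq, kq)) *m scalar_coefmx Q *m pid_mx kq) *m U ^t*.
  apply: orthoprojmx_unitary_similar; try exact: orthoprojmx_pad.
  by rewrite !mxrank_pad.
exists (kp + kq)%N, (map_mx ia U); do 2!split => //.
by rewrite is_unitary_in_alg -eP -eQ !padmx_in_alg mxstar_in_alg -!map_mxM ePQ.
Qed.

Definition unit_proj n : pmx A := existT _ n 1%:M.

Lemma is_proj_unit n : is_proj s (unit_proj n).
Proof.
rewrite /is_proj /= -(map_mx1 ia) is_projector_in_alg.
by split; rewrite ?mulmx1 // trmx1 map_mx1.
Qed.

Lemma proj_rank_unit n : proj_rank (unit_proj n) = n.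
Proof. by rewrite /proj_rank /= -(map_mx1 ia) scalar_coefmx_in_alg mxrank1. Qed.

Lemma K0_iso_Z_of_scalar_projections : K0_iso_Z s.
Proof.
exists (fun p q => (proj_rank p)%:Z - (proj_rank q)%:Z); split.
- move=> p q p' q' pP qP p'P q'P.
  have sumP a b c : is_proj s a -> is_proj s b -> is_proj s c ->
      is_proj s (pdsum (pdsum a b) c).
    by move=> aP bP cP; do !apply: is_proj_pdsum.
  split=> [e|[r [rP]]].
    exists p; split=> //.
    apply/(proj_equivE (sumP _ _ _ pP q'P pP) (sumP _ _ _ p'P qP pP)).
    by rewrite !proj_rank_pdsum; lia.
  move=> /(proj_equivE (sumP _ _ _ pP q'P rP) (sumP _ _ _ p'P qP rP)).
  by rewrite !proj_rank_pdsum; lia.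
- case=> n; [exists (unit_proj n), (unit_proj 0) | exists (unit_proj 0), (unit_proj n.+1)].
    by split; rewrite ?proj_rank_unit ?subr0 //; apply: is_proj_unit.
  by split; rewrite ?proj_rank_unit ?sub0r ?NegzE //; apply: is_proj_unit.
- by move=> p q p' q' _ _ _ _; rewrite !proj_rank_pdsum; lia.
Qed.

End ScalarProjections.

Section Admissible.
Variables (R : realType) (n : nat) (Theta : 'M[R]_(n.*2)).
Hypothesis Theta_adm : admissible Theta.

Lemma admissible_neq0 (p q : 'I_(n.*2)) : p./2 = q./2 -> p != q -> Theta p q != 0.
Proof.
rewrite -(inj_eq (@ord_inj _)) => pq /eqP p'q; have [adm_pair _] := Theta_adm.
have [op|ep] := boolP (odd p).
  have [Tqp ->] : 0 < Theta q p /\ Theta p q = - Theta q p.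
    by apply: adm_pair => /=; lia.
  by rewrite oppr_eq0 lt0r_neq0.
have [Tpq _] : 0 < Theta p q /\ Theta q p = - Theta p q.
  by apply: adm_pair => //=; lia.
exact: lt0r_neq0.
Qed.

Lemma admissible_support (p q : 'I_(n.*2)) : Theta p q != 0 -> p./2 = q./2 /\ p != q.
Proof.
have [_ adm_zero] := Theta_adm; move=> Tpq.
have : (~~ odd p && (val q == (val p).+1)) || (~~ odd q && (val p == (val q).+1)).
  apply: contraNT Tpq => /norP[pq qp]; apply/eqP/adm_zero => -[op /eqP eq].
    by rewrite op eq in pq.
  by rewrite op eq in qp.
by case/orP => /andP[? /eqP /= ?]; rewrite -(inj_eq (@ord_inj _)); split; lia.
Qed.

Lemma admissible_partner (q : 'I_(n.*2)) :
  exists q', Theta q' q != 0 /\ forall j, j != q -> Theta q' j = 0.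
Proof.
have q'lt : ((if odd q then q.-1 else q.+1) < n.*2)%N.
  by have := ltn_ord q; case: ifP; lia.
have q'q : (Ordinal q'lt)./2 = q./2 /\ Ordinal q'lt != q.
  by rewrite -(inj_eq (@ord_inj _)) /=; case: ifP; lia.
exists (Ordinal q'lt); split; first by apply: admissible_neq0; case: q'q.
move=> j jq; apply/eqP; apply: contraR jq => /admissible_support.
by case: q'q; rewrite -!(inj_eq (@ord_inj _)); lia.
Qed.

End Admissible.

Theorem theorem1p1 (R : realType) (n : nat) (Theta : 'M[R]_(n.*2))
    (A : algType R[i]) (star : A -> A) (x : 'I_(n.*2) -> A) :
  (1 <= n)%N ->
  admissible Theta ->
  is_star star ->
  (forall p, star (x p) = x p) ->
  (forall p q, x p * x q - x q * x p
               = (- (Complex 0 1) * real_complex R (Theta p q)) *: 1) ->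
  pbw_basis x ->
  K0_iso_Z star.
Proof.
move=> _ Theta_adm star_s star_x ad_x pbw.
pose k p q := - (Complex 0 1) * real_complex R (Theta p q).
have partner q : exists q', k q' q != 0 /\ forall j, j != q -> k q' j = 0.
  have [q' [Tq'q Tq'j]] := admissible_partner Theta_adm q.
  exists q'; rewrite /k; split=> [|j /Tq'j ->]; last by rewrite rmorph0 mulr0.
  by rewrite mulf_neq0 ?oppr_eq0 ?neq0Ci ?fmorph_eq0.
have nil := pbw_ad_nil (k := k) ad_x pbw; have center := pbw_center ad_x pbw partner.
apply: (K0_iso_Z_of_scalar_projections star_s) => N M.
  exact: (projector_entries_scalar (k := k) star_s star_x ad_x nil center).
exact: (unitary_entries_scalar (k := k) star_s star_x ad_x nil center).
Qed.
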